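(* Let $\mathcal U\subseteq M(\mathbb C)^g$ and $\mathcal V\subseteq M(\mathbb C)^{\tilde g}$ be non-commutative domains. If $f:\mathcal U\to\mathcal V$ is a proper analytic free map and $X\in\mathcal U(n)$, then the derivative $f'(X)=f[n]'(X):M_n(\mathbb C)^g\to M_n(\mathbb C)^{\tilde g}$ is one-to-one. In particular, if $g=\tilde g$, then $f'(X)$ is a vector space isomorphism.
   Context: $M_n(\mathbb C)^g$ denotes $g$-tuples of $n\times n$ complex matrices; products with matrices, unitary conjugation and direct sums of tuples are taken entrywise (direct sums block diagonally). A non-commutative set $\mathcal U\subseteq M(\mathbb C)^g$ is a sequence $(\mathcal U(n))_n$, $\mathcal U(n)\subseteq M_n(\mathbb C)^g$, closed under simultaneous unitary similarity $X\mapsto U^*XU$ and under direct sums; it is a non-commutative domain if each $\mathcal U(n)$ is open and connected. A free map $f:\mathcal U\to\mathcal V$ is a sequence of functions $f[n]:\mathcal U(n)\to\mathcal V(n)$ such that whenever $X\in\mathcal U(n)$, $Y\in\mathcal U(m)$, $\Gamma\in\mathbb C^{n\times m}$ with $X\Gamma=\Gamma Y$, then $f[n](X)\Gamma=\Gamma f[m](Y)$. It is an analytic free map if each $f[n]$ is holomorphic, and proper if each $f[n]:\mathcal U(n)\to\mathcal V(n)$ is proper (preimages of compact sets are compact). *)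

From HB Require Import structures.
From mathcomp Require Import all_boot all_order all_algebra.
From mathcomp Require Import complex.
From mathcomp Require Import all_classical all_reals all_analysis.
Set Implicit Arguments. Unset Strict Implicit. Unset Printing Implicit Defensive.
Import Order.TTheory GRing.Theory Num.Theory.
Import numFieldNormedType.Exports.
Local Open Scope ring_scope.
Local Open Scope classical_set_scope.
Local Open Scope complex_scope.

Definition CC (R : realType) : numFieldType := R[i].

(* A g-tuple of n x n complex matrices X = (X_1, ..., X_g) is encoded as the
   g x (n*n) matrix whose i-th row is mxvec X_i.  This is a C-linear
   isometric (for the max norms) identification M_n(C)^g ~ 'M[C]_(g, n*n),
   so it carries the right normed C-vector-space structure. *)
Definition mtuple (R : realType) (g n : nat) := 'M[CC R]_(g, n * n).

Definition tcomp (R : realType) (g n : nat) (X : mtuple R g n) (i : 'I_g)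
  : 'M[CC R]_n := vec_mx (row i X).

Definition tmk (R : realType) (g n : nat) (F : 'I_g -> 'M[CC R]_n)
  : mtuple R g n := \matrix_(i < g) mxvec (F i).

Definition adjmx (R : realType) (n : nat) (U : 'M[CC R]_n) : 'M[CC R]_n :=
  (map_mx (@conjc R) U)^T.
Definition unitary (R : realType) (n : nat) (U : 'M[CC R]_n) : Prop :=
  U *m adjmx U = 1%:M.

Definition tconj (R : realType) (g n : nat) (U : 'M[CC R]_n) (X : mtuple R g n)
  : mtuple R g n := tmk (fun i => adjmx U *m tcomp X i *m U).

Definition tdsum (R : realType) (g n m : nat) (X : mtuple R g n)
  (Y : mtuple R g m) : mtuple R g (n + m) :=
  tmk (fun i => block_mx (tcomp X i) 0 0 (tcomp Y i)).

Definition intertwines (R : realType) (g n m : nat) (X : mtuple R g n)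
  (Gam : 'M[CC R]_(n, m)) (Y : mtuple R g m) : Prop :=
  forall i : 'I_g, tcomp X i *m Gam = Gam *m tcomp Y i.

Definition nc_set (R : realType) (g : nat) (U : forall n, set (mtuple R g n))
  : Prop :=
  (forall n (V : 'M[CC R]_n) (X : mtuple R g n),
      unitary V -> U n X -> U n (tconj V X)) /\
  (forall n m (X : mtuple R g n) (Y : mtuple R g m),
      U n X -> U m Y -> U (n + m)%N (tdsum X Y)).

Definition nc_domain (R : realType) (g : nat) (U : forall n, set (mtuple R g n))
  : Prop :=
  nc_set U /\ (forall n, open (U n) /\ connected (U n)).

Definition free_map (R : realType) (g g' : nat)
  (U : forall n, set (mtuple R g n)) (V : forall n, set (mtuple R g' n))
  (f : forall n, mtuple R g n -> mtuple R g' n) : Prop :=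
  (forall n X, U n X -> V n (f n X)) /\
  (forall n m (X : mtuple R g n) (Y : mtuple R g m) (Gam : 'M[CC R]_(n, m)),
      U n X -> U m Y -> intertwines X Gam Y ->
      intertwines (f n X) Gam (f m Y)).

(* analytic: each f[n] is holomorphic on U(n), i.e. complex (Frechet)
   differentiable over C at every point of U(n) *)
Definition analytic_free_map (R : realType) (g g' : nat)
  (U : forall n, set (mtuple R g n)) (V : forall n, set (mtuple R g' n))
  (f : forall n, mtuple R g n -> mtuple R g' n) : Prop :=
  free_map U V f /\ (forall n X, U n X -> differentiable (f n) X).

Definition proper_free_map (R : realType) (g g' : nat)
  (U : forall n, set (mtuple R g n)) (V : forall n, set (mtuple R g' n))
  (f : forall n, mtuple R g n -> mtuple R g' n) : Prop :=
  forall n (K : set (mtuple R g' n)), compact K -> K `<=` V n ->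
    compact (U n `&` (f n @^-1` K)).

From HB Require Import structures.
From mathcomp Require Import all_boot all_order all_algebra.
From mathcomp Require Import complex.
From mathcomp Require Import all_classical all_reals all_analysis.
Import Order.TTheory GRing.Theory Num.Theory.
Import numFieldNormedType.Exports.
Local Open Scope ring_scope.
Local Open Scope classical_set_scope.

Set Implicit Arguments. Unset Strict Implicit. Unset Printing Implicit Defensive.

(* A free map respects upper block-triangular tuples:
   f [[A, C], [0, B]] = [[f A, *], [0, f B]].  For [[X, H], [0, X]] the corner
   is the derivative f'(X) H: conjugating (X + tH) (+) X by [[1, 1/t], [0, 1]]
   shows that, near X, the corner of f [[X + tH, H], [0, X]] is the difference
   quotient (f (X + tH) - f X) / t.  So if f'(X) H = 0, then f is constant,
   equal to f (X (+) X), on the real line r |-> [[X, rH], [0, X]] wherever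
   that line lies in U; by connectedness of R the whole line lies in U, hence
   in the fibre of f over f (X (+) X), which is compact by properness.  A
   compact set contains no line, so H = 0.  When g = g', injectivity of the
   linear map f'(X) between spaces of equal finite dimension gives bijectivity. *)

Section TupleAlgebra.
Variables (R : realType) (g : nat).
Local Notation K := (CC R).

Lemma tcomp_tmk n (F : 'I_g -> 'M[K]_n) i : tcomp (tmk F) i = F i.
Proof. by rewrite /tcomp /tmk rowK mxvecK. Qed.

Lemma tcompP n (P Q : mtuple R g n) : (forall i, tcomp P i = tcomp Q i) <-> P = Q.
Proof.
split=> [PQ|-> //]; apply/row_matrixP => i.
by rewrite -[row i P]vec_mxK -[row i Q]vec_mxK -!/(tcomp _ i) PQ.
Qed.

Lemma tcompD n (P Q : mtuple R g n) i : tcomp (P + Q) i = tcomp P i + tcomp Q i.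
Proof. by rewrite /tcomp !linearD. Qed.

Lemma tcompZ n (a : K) (P : mtuple R g n) i : tcomp (a *: P) i = a *: tcomp P i.
Proof. by rewrite /tcomp !linearZ. Qed.

Lemma tcompB n (P Q : mtuple R g n) i : tcomp (P - Q) i = tcomp P i - tcomp Q i.
Proof. by rewrite /tcomp !linearB. Qed.

Lemma tcomp0 n i : tcomp (0 : mtuple R g n) i = 0.
Proof. by rewrite /tcomp !linear0. Qed.

Definition tuptri n (A C B : mtuple R g n) : mtuple R g (n + n) :=
  tmk (fun i => block_mx (tcomp A i) (tcomp C i) 0 (tcomp B i)).

Definition tursub n (P : mtuple R g (n + n)) : mtuple R g n :=
  tmk (fun i => ursubmx (tcomp P i)).

Lemma tuptri0 n (A B : mtuple R g n) : tuptri A 0 B = tdsum A B.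
Proof. by congr tmk; apply: funext => i; rewrite tcomp0. Qed.

Lemma tuptriDZ n (a : K) (A1 C1 B1 A2 C2 B2 : mtuple R g n) :
  tuptri (a *: A1 + A2) (a *: C1 + C2) (a *: B1 + B2) =
  a *: tuptri A1 C1 B1 + tuptri A2 C2 B2.
Proof.
apply/tcompP => i; rewrite tcompD tcompZ !tcomp_tmk !tcompD !tcompZ.
by rewrite scale_block_mx add_block_mx scaler0 addr0.
Qed.

Lemma tursub_tuptri n (A C B : mtuple R g n) : tursub (tuptri A C B) = C.
Proof. by apply/tcompP => i; rewrite !tcomp_tmk block_mxKur. Qed.

Lemma tursub_is_linear n : linear (@tursub n).
Proof.
move=> a P Q; apply/tcompP => i.
rewrite tcompD tcompZ !tcomp_tmk tcompD tcompZ.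
by apply/matrixP => x y; rewrite !mxE.
Qed.

HB.instance Definition _ n :=
  GRing.isLinear.Build K (mtuple R g (n + n)) (mtuple R g n) _ (@tursub n)
    (@tursub_is_linear n).

End TupleAlgebra.

Ltac mx_simpl := rewrite ?(mulmx1, mul1mx, mulmx0, mul0mx, addr0, add0r).

Section FreeMap.
Variables (R : realType) (g g' : nat).
Variables (U : forall n, set (mtuple R g n)) (V : forall n, set (mtuple R g' n)).
Variable f : forall n, mtuple R g n -> mtuple R g' n.
Arguments U : clear implicits.
Arguments f : clear implicits.
Hypothesis f_free : free_map U V f.
Local Notation K := (CC R).

Lemma free_map_tdsum n m (A : mtuple R g n) (B : mtuple R g m) :
  U n A -> U m B -> U (n + m)%N (tdsum A B) -> f _ (tdsum A B) = tdsum (f _ A) (f _ B).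
Proof.
have [_ f_intw] := f_free; move=> UA UB UAB.
have inl : intertwines (tdsum A B) (col_mx 1%:M 0) A.
  by move=> i; rewrite tcomp_tmk mul_block_col mul_col_mx; mx_simpl.
have inr : intertwines (tdsum A B) (col_mx 0 1%:M) B.
  by move=> i; rewrite tcomp_tmk mul_block_col mul_col_mx; mx_simpl.
apply/tcompP => i; rewrite tcomp_tmk.
have := f_intw _ _ _ _ _ UAB UA inl i; have := f_intw _ _ _ _ _ UAB UB inr i.
rewrite -[tcomp (f _ (tdsum A B)) i]submxK !mul_block_col !mul_col_mx; mx_simpl.
by move=> /eq_col_mx [-> ->] /eq_col_mx [-> ->].
Qed.

Lemma free_map_tuptri n (A C B : mtuple R g n) i :
  U n A -> U n B -> U (n + n)%N (tuptri A C B) ->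
  tcomp (f _ (tuptri A C B)) i =
  block_mx (tcomp (f _ A) i) (tcomp (tursub (f _ (tuptri A C B))) i) 0 (tcomp (f _ B) i).
Proof.
have [_ f_intw] := f_free; move=> UA UB UT.
have inl : intertwines (tuptri A C B) (col_mx 1%:M 0) A.
  by move=> j; rewrite tcomp_tmk mul_block_col mul_col_mx; mx_simpl.
have inr : intertwines B (row_mx 0 1%:M) (tuptri A C B).
  by move=> j; rewrite tcomp_tmk mul_row_block mul_mx_row; mx_simpl.
have := f_intw _ _ _ _ _ UT UA inl i; have := f_intw _ _ _ _ _ UB UT inr i.
rewrite tcomp_tmk -[tcomp (f _ (tuptri A C B)) i]submxK.
rewrite mul_block_col mul_col_mx mul_row_block mul_mx_row block_mxKur; mx_simpl.
by move=> /eq_row_mx [dl dr] /eq_col_mx [ul _]; rewrite ul dl dr.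
Qed.

Lemma tursub_free_map_diff_quotient n (X H : mtuple R g n) (t : K) :
  t != 0 -> U n X -> U n (t *: H + X) ->
  U (n + n)%N (tdsum (t *: H + X) X) -> U (n + n)%N (tuptri (t *: H + X) H X) ->
  tursub (f _ (tuptri (t *: H + X) H X)) = t^-1 *: (f _ (t *: H + X) - f _ X).
Proof.
have [_ f_intw] := f_free; move=> t0 UX UA UD UT.
set A := t *: H + X.
have sim : intertwines (tdsum A X) (block_mx 1%:M (t^-1)%:M 0 1%:M) (tuptri A H X).
  move=> i; rewrite !tcomp_tmk !mulmx_block; mx_simpl.
  rewrite mul_mx_scalar mul_scalar_mx /A tcompD tcompZ.
  by rewrite scalerDr scalerA mulVf // scale1r.
apply/tcompP => i; have := f_intw _ _ _ _ _ UD UT sim i.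
rewrite free_map_tdsum // free_map_tuptri // !tcomp_tmk !mulmx_block; mx_simpl.
rewrite mul_mx_scalar mul_scalar_mx => /eq_block_mx [_ corner _ _].
by rewrite tcompZ tcompB scalerBr corner addrK.
Qed.

End FreeMap.

Section MatrixNorm.
Variable K : numDomainType.

Lemma mx_norm_entry_le m p (M : 'M[K]_(m, p)) i j : `|M i j| <= `|M|.
Proof.
rewrite [`|M|]mx_normE -[leLHS]nngE num_le.
exact: (le_bigmax 0%:nng (fun k : 'I_m * 'I_p => `|M k.1 k.2|%:nng) (i, j)).
Qed.

Lemma mx_norm_le_entries m p m' p' (M : 'M[K]_(m, p)) (N : 'M[K]_(m', p')) :
  (forall i j, exists i' j', M i j = N i' j') -> `|M| <= `|N|.
Proof.
move=> MN; rewrite [`|M|]mx_normE -[leRHS]nngE num_le; apply/bigmax_leP.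
split=> [|[i j] _ /=]; first by rewrite -num_le /=.
by rewrite -num_le /=; have [i' [j' ->]] := MN i j; exact: mx_norm_entry_le.
Qed.

End MatrixNorm.

Section Corner.
Variables (R : realType) (g : nat).
Local Notation K := (CC R).

Lemma norm_tursub_le n (P : mtuple R g (n + n)) : `|tursub P| <= `|P|.
Proof.
apply: mx_norm_le_entries => a; case/mxvec_indexP => x y.
exists a, (mxvec_index (lshift n x) (rshift n y)).
by rewrite /tursub /tmk /tcomp !mxE mxvecE !mxE.
Qed.

Lemma tursub_continuous n : continuous (@tursub R g n).
Proof.
apply: bounded_linear_continuous; apply/linear_boundedP.
near=> r => P; apply: le_trans (norm_tursub_le P) _.
rewrite ler_peMl //; near: r; exact: nbhs_pinfty_ge.
Unshelve. all: by end_near.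
Qed.

End Corner.

Lemma affine_cvg (K : numFieldType) (V : normedModType K) (E W : V) (s : K) :
  (fun t : K => t *: E + W) @ s --> s *: E + W.
Proof.
apply: (@cvgD _ _ _ (nbhs s)); last exact: cvg_cst.
by apply: cvgZr_tmp; exact: cvg_id.
Qed.

Lemma affine_cvg_dnbhs0 (K : numFieldType) (V : normedModType K) (E W : V) :
  (fun t : K => t *: E + W) @ 0^' --> W.
Proof.
apply: cvg_within_filter.
by have := @affine_cvg K V E W 0; rewrite scale0r add0r.
Qed.

Section Derivative.
Variables (R : realType) (g g' : nat).
Variables (U : forall n, set (mtuple R g n)) (V : forall n, set (mtuple R g' n)).
Variable f : forall n, mtuple R g n -> mtuple R g' n.
Arguments U : clear implicits.
Arguments f : clear implicits.
Hypothesis U_domain : nc_domain U.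
Hypothesis f_analytic : analytic_free_map U V f.
Local Notation K := (CC R).

Lemma diff_free_map_tursub n (X H : mtuple R g n) :
  U n X -> U (n + n)%N (tuptri X H X) -> 'd (f n) X H = tursub (f _ (tuptri X H X)).
Proof.
have [[_ U_dsum] U_top] := U_domain; have [f_free f_diff] := f_analytic.
move=> UX UT; set T := fun t : K => tuptri (t *: H + X) H X.
have T_lim : T @ 0^' --> tuptri X H X.
  suff -> : T = fun t => t *: tuptri H 0 0 + tuptri X H X by exact: affine_cvg_dnbhs0.
  by apply: funext => t; rewrite -tuptriDZ scaler0 !add0r.
have near_U : \forall t \near 0^', U n (t *: H + X).
  exact: affine_cvg_dnbhs0 _ (open_nbhs_nbhs (conj (U_top n).1 UX)).
have near_UT : \forall t \near 0^', U (n + n)%N (T t).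
  exact: T_lim _ (open_nbhs_nbhs (conj (U_top (n + n)%N).1 UT)).
have dq_lim : (fun t : K => t^-1 *: (f _ (t *: H + X) - f _ X)) @ 0^' --> 'd (f n) X H.
  have fX := f_diff _ _ UX; rewrite -(deriveE H fX); exact: diff_derivable H fX.
have corner_lim : (fun t => tursub (f _ (T t))) @ 0^' --> tursub (f _ (tuptri X H X)).
  have fT := differentiable_continuous (f_diff _ _ UT).
  by apply: (cvg_comp _ _ (cvg_comp _ _ T_lim fT)); exact: tursub_continuous.
have dq_corner : (fun t : K => t^-1 *: (f _ (t *: H + X) - f _ X)) @ 0^' -->
    tursub (f _ (tuptri X H X)).
  apply: cvg_trans corner_lim; apply: near_eq_cvg.
  near=> t; rewrite (tursub_free_map_diff_quotient f_free) //.
  - by near: t; exact: nbhs_dnbhs_neq.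
  - by near: t.
  - by apply: U_dsum => //; near: t.
  - by near: t.
by rewrite -(cvg_lim (@norm_hausdorff _ _) dq_lim) (cvg_lim (@norm_hausdorff _ _) dq_corner).
Unshelve. all: by end_near.
Qed.

End Derivative.

Section RealLines.
Variables (R : realType) (V : normedModType (CC R)).
Local Notation K := (CC R).
Local Open Scope complex_scope.

Lemma normc_real (x : R) : `|x%:C : K| = `|x|%:C.
Proof. by rewrite normc_def /= expr0n /= addr0 sqrtr_sqr. Qed.

Lemma real_complex_continuous : continuous (fun x : R => x%:C : K).
Proof.
move=> r; apply/cvgrPdist_lt => e e0; move: (e0); rewrite ltcE => /andP[/eqP eI eR].
have eE : e = (complex.Re e)%:C by case: e eI {e0 eR} => a b /= ->.
near=> t; rewrite -rmorphB normc_real [ltRHS]eE ltcR.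
by near: t; exact: cvgr_dist_lt.
Unshelve. all: by end_near.
Qed.

Lemma real_line_continuous (E W : V) : continuous (fun r : R => r%:C *: E + W).
Proof.
change (continuous ((fun t : K => t *: E + W) \o (fun x : R => x%:C : K))).
move=> r; apply: continuous_comp; first exact: real_complex_continuous.
exact: affine_cvg.
Qed.

(* The parameters r of the points of the line lying in S form a clopen subset of R. *)
Lemma real_line_sub_open (E W : V) (S C : set V) :
  open S -> closed C -> C `<=` S ->
  (forall r : R, S (r%:C *: E + W) -> C (r%:C *: E + W)) ->
  S W -> forall r : R, S (r%:C *: E + W).
Proof.
move=> S_open C_closed CS SC SW; pose line r := r%:C *: E + W.
have line_cont : continuous line by exact: real_line_continuous.
suff : line @^-1` S = setT by move=> lineS r; rewrite -[S _]/((line @^-1` S) r) lineS.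
have RT : connected [set: R] by apply/connected_intervalP => x y _ _ z _.
apply: RT.
- by exists 0; rewrite /= /line scale0r add0r.
- by exists (line @^-1` S); [exact: open_comp | rewrite setTI].
- exists (line @^-1` C); first exact: preimage_closed.
  by rewrite setTI; apply/seteqP; split=> r; [exact: SC | exact: CS].
Qed.

Lemma compact_norm_bounded (A : set V) : compact A ->
  exists M : R, forall x, A x -> `|x| < M%:C.
Proof.
rewrite compact_cover => A_cover.
pose O (k : nat) := [set x : V | `|x| < k%:R%:C].
have O_open k : [set: nat] k -> open (O k).
  move=> _; rewrite openE => x Ox; apply/nbhs_ballP.
  exists (k%:R%:C - `|x|); first by rewrite /= subr_gt0.
  move=> y; rewrite -ball_normE /= ltrBrDr distrC => yx.
  by apply: le_lt_trans yx; rewrite -{1}(subrK x y) ler_normD.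
have A_O : A `<=` \bigcup_(k in [set: nat]) O k.
  move=> x _; exists (Num.truncn (complex.Re `|x|)).+1 => //.
  by rewrite /O /= -(RRe_real (normr_real x)) ltcR truncnS_gt.
have [D _ DA] := A_cover _ _ _ O_open A_O.
exists (\max_(i <- finmap.enum_fset D) i)%:R => x /DA [k Dk Ok].
apply: (lt_le_trans Ok); rewrite lecR ler_nat.
exact: (@leq_bigmax_seq _ _ xpredT id k Dk).
Qed.

Lemma compact_real_line_eq0 (A : set V) (E W : V) :
  compact A -> (forall r : R, A (r%:C *: E + W)) -> E = 0.
Proof.
move=> /compact_norm_bounded [M AM] lineA; apply/eqP/negPn/negP => E0.
have nrE (x : V) : (complex.Re `|x|)%:C = `|x| := RRe_real (normr_real x).
have M_gt0 : 0 < M.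
  by rewrite -ltcR; exact: le_lt_trans (normr_ge0 _) (AM _ (lineA 0)).
have E_gt0 : 0 < complex.Re `|E| by rewrite -ltcR nrE normr_gt0.
set r := (M + complex.Re `|W|) / complex.Re `|E|.
have W_ge0 : 0 <= complex.Re `|W| by rewrite -lecR nrE normr_ge0.
have r_ge0 : 0 <= r by rewrite divr_ge0 ?addr_ge0 // ltW.
have far : M%:C <= `|r%:C *: E + W|.
  apply: le_trans (lerB_normD _ W); rewrite normrZ normc_real ger0_norm //.
  by rewrite -(nrE E) -(nrE W) -rmorphM -rmorphB lecR /r divfK ?gt_eqF // addrK.
by have := lt_le_trans (AM _ (lineA r)) far; rewrite ltxx.
Qed.

End RealLines.

Section Kernel.
Variables (R : realType) (g g' : nat).
Variables (U : forall n, set (mtuple R g n)) (V : forall n, set (mtuple R g' n)).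
Variable f : forall n, mtuple R g n -> mtuple R g' n.
Arguments U : clear implicits.
Arguments f : clear implicits.
Hypothesis U_domain : nc_domain U.
Hypothesis f_analytic : analytic_free_map U V f.
Hypothesis f_proper : proper_free_map U V f.
Local Open Scope complex_scope.

Lemma free_map_tuptri_diff_eq0 n (X H : mtuple R g n) :
  U n X -> U (n + n)%N (tuptri X H X) -> 'd (f n) X H = 0 ->
  f _ (tuptri X H X) = f _ (tdsum X X).
Proof.
have [[_ U_dsum] _] := U_domain; have [f_free _] := f_analytic.
move=> UX UT dH; have UXX := U_dsum _ _ _ _ UX UX.
rewrite (free_map_tdsum f_free) //; apply/tcompP => i.
rewrite (free_map_tuptri f_free) // -(diff_free_map_tursub U_domain f_analytic) //.
by rewrite dH tcomp0 tcomp_tmk.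
Qed.

Lemma diff_free_map_eq0 n (X H : mtuple R g n) : U n X -> 'd (f n) X H = 0 -> H = 0.
Proof.
have [[_ U_dsum] U_top] := U_domain; have [f_free _] := f_analytic.
move=> UX dH; have UXX := U_dsum _ _ _ _ UX UX.
pose line r := r%:C *: tuptri 0 H 0 + tdsum X X.
have lineE r : line r = tuptri X (r%:C *: H) X.
  by rewrite /line -tuptri0 -tuptriDZ !scaler0 !add0r addr0.
pose P := U (n + n)%N `&` f _ @^-1` [set f _ (tdsum X X)].
have P_compact : compact P.
  by apply: f_proper; [exact: compact_set1 | move=> _ ->; exact: f_free.1].
have P_line r : U (n + n)%N (line r) -> P (line r).
  move=> Ur; split=> //; rewrite /= lineE in Ur *.
  by apply: free_map_tuptri_diff_eq0; rewrite // linearZ dH /= scaler0.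
have U_line : forall r, U (n + n)%N (line r).
  apply: (real_line_sub_open (S := U (n + n)%N) (C := P)) => //.
  - exact: (U_top _).1.
  - exact: compact_closed (@norm_hausdorff _ _) P_compact.
  - by move=> ? [].
have E0 := compact_real_line_eq0 P_compact (fun r => P_line r (U_line r)).
by rewrite -[H](tursub_tuptri 0 _ 0) E0 linear0.
Qed.

End Kernel.

Lemma linear_inj_bij (F : fieldType) m p (L : {linear 'M[F]_(m, p) -> 'M[F]_(m, p)}) :
  injective L -> bijective L.
Proof.
move=> L_inj; set A := lin_mx L.
have A_free : row_free A.
  rewrite -kermx_eq0; apply/eqP/row_matrixP => i; rewrite row0.
  set v := row i (kermx A).
  have vA : v *m A = 0 by rewrite /v -row_mul mulmx_ker row0.
  suff : L (vec_mx v) = L 0 by move/L_inj/(congr1 mxvec); rewrite vec_mxK linear0.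
  by apply: (can_inj mxvecK); rewrite -mul_vec_lin vec_mxK vA !linear0.
have A_unit : A \in unitmx by rewrite -row_free_unit.
exists (fun w => vec_mx (mxvec w *m invmx A)) => [x | w].
  by rewrite -mul_vec_lin mulmxK // mxvecK.
by apply: (can_inj mxvecK); rewrite -mul_vec_lin vec_mxK mulmxKV // mxvecK.
Qed.

Theorem proposition3p4 (R : realType) (g g' : nat)
  (U : forall n, set (mtuple R g n)) (V : forall n, set (mtuple R g' n))
  (f : forall n, mtuple R g n -> mtuple R g' n) :
  nc_domain U -> nc_domain V ->
  analytic_free_map U V f -> proper_free_map U V f ->
  forall (n : nat) (X : mtuple R g n), U n X ->
    injective ('d (f n) X) /\ (g = g' -> bijective ('d (f n) X)).
Proof.
move=> U_domain _ f_analytic f_proper n X UX.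
have d_inj : injective ('d (f n) X).
  move=> H1 H2 dH; apply/eqP; rewrite -subr_eq0; apply/eqP.
  by apply: (diff_free_map_eq0 U_domain f_analytic f_proper UX); rewrite linearB dH subrr.
by split=> // gg'; subst g'; exact: linear_inj_bij.
Qed.
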